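(* Let $G$ be a connected, finite, pointed, edge-ordered graph with distinguished vertex $v_0$, and let $T=(\Gamma\circ S)(G)$. Then the neighborhood ordering $\triangleleft$ of the distinguished point $v_0$ in $T$ is the lexicographic breadth-first traversal of $G$: for vertices $u,v$ of $G$ with $v_0\to u$ and $v_0\to v$ in $T$, $v_0\to u\triangleleft v_0\to v$ in $T$ iff $u$ precedes $v$ in the lexicographic breadth-first traversal of $G$ (and these targets are the vertices other than $v_0$, which comes first in the traversal).
   Context: A (directed) graph is $(V,\to)$ with $\to\subseteq V\times V$; $N(u)$ is the set of outgoing edges of $u$. A pointed graph has a distinguished vertex $v_0$; connected means every vertex is reachable by a path from $v_0$. A path is a finite sequence $v_1\to\cdots\to v_n$ of vertices joined by edges, of length $|\pi|$; co-initial paths share their source; $\pi\sqsubset\sigma$ means $\pi$ is a proper prefix of $\sigma$. A finite edge-ordered graph is a finite graph with a strict linear order $\triangleleft$ on each neighborhood. Lexicographic path order: if $\pi\sqsubset\sigma$ then $\pi\prec\sigma$ (symmetrically); otherwise, with $\zeta$ the longest common prefix, $u$ its target and $v_1,v_2$ the next vertices, $\pi\prec\sigma$ iff $u\to v_1\triangleleft u\to v_2$. Shortlex: $\pi\prec^s\sigma$ iff $|\pi|<|\sigma|$ or ($|\pi|=|\sigma|$ and $\pi\prec\sigma$). $\min^s(u\rightsquigarrow v)$ is the $\prec^s$-least path from $u$ to $v$. Lexicographic breadth-first search on $G$: initialize a list $L=()$ and a queue $Q=(v_0)$; while $Q$ is nonempty, dequeue the front element $v$; if $v\in L$, continue; otherwise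 append $v$ to $L$ and enqueue the vertices of $\partial v$ (neighbors of $v$ not in $L$) in $\triangleleft$-order. The lexicographic breadth-first traversal is the order in which vertices are appended to $L$. An arborescence is a pointed graph with a unique path $v_0\rightsquigarrow u$ for every $u$. Functors: $S(G)$ is the edge-ordered arborescence on the vertices of $G$ with the same distinguished vertex, containing $u\to v$ iff it is an edge of $\min^s(v_0\rightsquigarrow v)$ in $G$, with edge order inherited from $G$. For an edge-ordered arborescence $A$, $\Gamma(A)$ has the same vertices and distinguished point, edge relation the transitive closure of that of $A$, and $u\to v_1\triangleleft u\to v_2$ iff $(v_0\rightsquigarrow v_1)\prec^s(v_0\rightsquigarrow v_2)$, where $v_0\rightsquigarrow v$ denotes the unique path in $A$. *)

From mathcomp Require Import all_boot.
From Stdlib Require Import Relations.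

Set Implicit Arguments.
Unset Strict Implicit.
Unset Printing Implicit Defensive.

Section Graphs.
Variable V : finType.

(* A graph on V: edge relation E; an edge order: ord u v1 v2 means
   (u -> v1) <| (u -> v2) in the neighbourhood of u. *)

Definition edge_ordered (E : V -> V -> Prop) (ord : V -> V -> V -> Prop) : Prop :=
  forall u,
    (forall x y, ord u x y -> E u x /\ E u y) /\
    (forall x, ~ ord u x x) /\
    (forall x y z, ord u x y -> ord u y z -> ord u x z) /\
    (forall x y, E u x -> E u y -> x <> y -> ord u x y \/ ord u y x).

Fixpoint is_walk (E : V -> V -> Prop) (x : V) (s : seq V) : Prop :=
  match s with
  | [::] => True
  | y :: s' => E x y /\ is_walk E y s'
  end.

Definition walk (E : V -> V -> Prop) (x y : V) (p : seq V) : Prop :=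
  match p with
  | [::] => False
  | a :: s => a = x /\ is_walk E a s /\ last a s = y
  end.

Definition connected (E : V -> V -> Prop) (v0 : V) : Prop :=
  forall v, exists p, walk E v0 v p.

Definition lexlt (ord : V -> V -> V -> Prop) (p q : seq V) : Prop :=
  (prefix p q /\ p <> q) \/
  (exists x z v1 v2 r1 r2,
      p = x :: z ++ v1 :: r1 /\ q = x :: z ++ v2 :: r2 /\ v1 <> v2 /\
      ord (last x z) v1 v2).

Definition shortlex (ord : V -> V -> V -> Prop) (p q : seq V) : Prop :=
  size p < size q \/ (size p = size q /\ lexlt ord p q).

Definition minpath E ord (v0 v : V) (p : seq V) : Prop :=
  walk E v0 v p /\ forall q, walk E v0 v q -> q = p \/ shortlex ord p q.

Definition S_edge E ord (v0 : V) (u v : V) : Prop :=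
  exists p p1 p2, minpath E ord v0 v p /\ p = p1 ++ u :: v :: p2.

Definition S_ord E ord (v0 : V) (u v1 v2 : V) : Prop :=
  S_edge E ord v0 u v1 /\ S_edge E ord v0 u v2 /\ ord u v1 v2.

(* the functor Gamma, for an edge-ordered arborescence (A, Aord, v0);
   the unique path v0 ~> v in A is referred to as "a path v0 ~> v in A". *)
Definition Gamma_edge (A : V -> V -> Prop) : V -> V -> Prop := clos_trans V A.

Definition Gamma_ord (A : V -> V -> Prop) (Aord : V -> V -> V -> Prop) (v0 : V)
    (u v1 v2 : V) : Prop :=
  clos_trans V A u v1 /\ clos_trans V A u v2 /\
  exists p1 p2, walk A v0 v1 p1 /\ walk A v0 v2 p2 /\ shortlex Aord p1 p2.

(* Lexicographic breadth-first search, as a (deterministic) transition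
   relation on states (L, Q). *)
Fixpoint chain (R : V -> V -> Prop) (s : seq V) : Prop :=
  match s with
  | x :: ((y :: _) as s') => R x y /\ chain R s'
  | _ => True
  end.

Inductive lbfs_step (E : V -> V -> Prop) (ord : V -> V -> V -> Prop) :
    seq V * seq V -> seq V * seq V -> Prop :=
  | lbfs_skip L v Q : v \in L -> lbfs_step E ord (L, v :: Q) (L, Q)
  | lbfs_visit L v Q ns :
      v \notin L -> uniq ns ->
      (forall x, x \in ns <-> (E v x /\ x \notin rcons L v)) ->
      chain (ord v) ns ->
      lbfs_step E ord (L, v :: Q) (rcons L v, Q ++ ns).

Definition lbfs_traversal E ord (v0 : V) (L : seq V) : Prop :=
  clos_refl_trans _ (lbfs_step E ord) ([::], [:: v0]) (L, [::]).

Definition precedes (L : seq V) (u v : V) : Prop :=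
  u \in L /\ v \in L /\ index u L < index v L.

End Graphs.

From mathcomp Require Import all_boot boolp zify.
From Stdlib Require Import Relations.

Set Implicit Arguments.
Unset Strict Implicit.
Unset Printing Implicit Defensive.

(* Every prefix of a shortlex-least path from v0 is again shortlex-least, so the
   tree S(G) consists exactly of the least paths, Γ joins v0 to every other
   vertex, and v0's neighbourhood in Γ(S(G)) is ordered by comparing least paths.
   Lexicographic BFS visits the vertices in that order: the visited list is
   always an initial segment of it, and the queue, read as (parent, child)
   entries, is sorted by parent and then by the edge order at the parent.  Since
   the least path to w is the least path to its parent followed by one edge, the
   first unvisited entry of the queue is the least unvisited vertex. *)

Section Walks.
Variable V : finType.
Implicit Types (R : V -> V -> Prop) (o : V -> V -> V -> Prop) (p q s t : seq V).

Lemma is_walk_cat R x p q :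
  is_walk R x (p ++ q) <-> is_walk R x p /\ is_walk R (last x p) q.
Proof. by elim: p x => [|y p IH] x /=; [|rewrite IH]; tauto. Qed.

Lemma is_walk_rcons R x p y :
  is_walk R x (rcons p y) <-> is_walk R x p /\ R (last x p) y.
Proof. by rewrite -cats1 is_walk_cat /=; tauto. Qed.

Lemma walkE R x y p :
  walk R x y p <-> exists s, [/\ p = x :: s, is_walk R x s & last x s = y].
Proof.
case: p => [|a s] /=; first by split=> // [[s []]].
by split=> [[-> [Ws Ls]]|[s' [[-> ->] Ws Ls]]]; [exists s|].
Qed.

Lemma is_walk_clos_trans R x p :
  p <> [::] -> is_walk R x p -> clos_trans V R x (last x p).
Proof.
elim: p x => [//|y p IH] x _ /= [Rxy Wp].
have [->|/eqP p_nil] := eqVneq p [::]; first exact: t_step.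
exact: t_trans _ _ _ _ _ (t_step _ _ _ _ Rxy) (IH _ p_nil Wp).
Qed.

Lemma is_walk_closed R (L : seq V) x p :
  (forall a b, a \in L -> R a b -> b \in L) -> x \in L -> is_walk R x p ->
  last x p \in L.
Proof.
by move=> closedL; elim: p x => //= y p IH x xL [Rxy Wp]; apply: IH (closedL _ _ xL Rxy) Wp.
Qed.

(* [lex_from o u p q] and [shortlex_from o u p q] compare the paths [u :: p] and [u :: q]. *)
Fixpoint lex_from o u p q : Prop :=
  match p, q with
  | a :: p', b :: q' => (a <> b /\ o u a b) \/ (a = b /\ lex_from o a p' q')
  | _, _ => False
  end.

Definition shortlex_from o u p q : Prop :=
  size p < size q \/ (size p = size q /\ lex_from o u p q).

Lemma lex_from_cat o x z a b r1 r2 :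
  a <> b -> o (last x z) a b -> lex_from o x (z ++ a :: r1) (z ++ b :: r2).
Proof. by elim: z x => [|c z IH] x /= ab oab; [left|right; split=> //; apply: IH]. Qed.

Lemma lex_fromP o x p q : lex_from o x p q ->
  exists z a b r1 r2,
    [/\ p = z ++ a :: r1, q = z ++ b :: r2, a <> b & o (last x z) a b].
Proof.
elim: p x q => [|a p IH] x [|b q] //= [[ab oab]|[<- /IH [z [c [d [r1 [r2 [-> -> cd ocd]]]]]]]].
  by exists [::], a, b, p, q.
by exists (a :: z), c, d, r1, r2.
Qed.

Lemma lex_from_catr o x p q s t :
  lex_from o x p q -> lex_from o x (p ++ s) (q ++ t).
Proof.
by elim: p x q => [|a p IH] x [|b q] //= [|[ab /IH]]; [left|right].
Qed.

Lemma lexlt_cons o x p q :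
  size p = size q -> lexlt o (x :: p) (x :: q) <-> lex_from o x p q.
Proof.
move=> size_pq; split.
  case=> [[]|[y [z [a [b [r1 [r2 [[xy ->] [[_ ->] [ab oab]]]]]]]]]].
    by rewrite prefixE /= size_pq take_size => /eqP ->.
  by rewrite xy; apply: lex_from_cat.
move/lex_fromP=> [z [a [b [r1 [r2 [-> -> ab oab]]]]]].
by right; exists x, z, a, b, r1, r2.
Qed.

Lemma shortlex_cons o x p q :
  shortlex o (x :: p) (x :: q) <-> shortlex_from o x p q.
Proof.
rewrite /shortlex /shortlex_from /= ltnS.
split=> [] [lt_pq|[size_pq lex_pq]]; try by left.
  by case: size_pq => size_pq; right; split=> //; apply/lexlt_cons.
by right; split; [rewrite size_pq|apply/lexlt_cons].
Qed.

Lemma shortlex_from_size o x p q : shortlex_from o x p q -> size p <= size q.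
Proof. by case=> [/ltnW|[-> _]]. Qed.

Lemma shortlex_from_cat o x p q s t : size s = size t ->
  shortlex_from o x p q -> shortlex_from o x (p ++ s) (q ++ t).
Proof.
rewrite /shortlex_from !size_cat => <- [lt_pq|[-> lex_pq]].
  by left; rewrite ltn_add2r.
by right; split=> //; apply: lex_from_catr.
Qed.

Lemma eq_lex_from o o' R x p q :
  (forall u a b, R u a -> R u b -> (o u a b <-> o' u a b)) ->
  is_walk R x p -> is_walk R x q -> (lex_from o x p q <-> lex_from o' x p q).
Proof.
move=> oo'; elim: p x q => [|a p IH] x [|b q] //= [Ra Wp] [Rb Wq].
rewrite oo' //; split=> [] [|[ab lex_pq]]; try by left.
all: by right; split=> //; rewrite -ab in Wq *; apply/(IH a q Wp Wq).
Qed.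

Lemma chainE R s : chain R s <-> sorted (fun a b => `[< R a b >]) s.
Proof.
elim: s => [|x [|y s] IH] //.
have -> : chain R [:: x, y & s] = (R x y /\ chain R (y :: s)) by [].
by rewrite IH /=; split=> [[/asboolP -> ->]|/andP [/asboolP ? ?]].
Qed.

End Walks.

Section EdgeOrder.
Variables (V : finType) (E : V -> V -> Prop) (ord : V -> V -> V -> Prop).
Hypothesis ordE : edge_ordered E ord.
Implicit Types (p q r : seq V).

Lemma ord_irr u x : ~ ord u x x.
Proof. by have [_ [irr _]] := ordE u; apply: irr. Qed.

Lemma ord_trans u x y z : ord u x y -> ord u y z -> ord u x z.
Proof. by have [_ [_ [trans _]]] := ordE u; apply: trans. Qed.

Lemma ord_total u x y : E u x -> E u y -> x <> y -> ord u x y \/ ord u y x.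
Proof. by have [_ [_ [_ total]]] := ordE u; apply: total. Qed.

Lemma lex_from_irr u p : ~ lex_from ord u p p.
Proof. by elim: p u => [|a p IH] u //= [[aa _]|[_ lex]]; [apply: aa|apply: IH lex]. Qed.

Lemma lex_from_trans u p q r :
  lex_from ord u p q -> lex_from ord u q r -> lex_from ord u p r.
Proof.
elim: p u q r => [|a p IH] u [|b q] [|c r] //=.
case=> [[ab oab]|[<- lex_pq]] [[bc obc]|[<- lex_qr]]; try by left.
  left; have oac := ord_trans oab obc; split=> // ac.
  by rewrite ac in oac; apply: ord_irr oac.
by right; split=> //; apply: IH lex_pq lex_qr.
Qed.

Lemma lex_from_total u p q : is_walk E u p -> is_walk E u q ->
  size p = size q -> p <> q -> lex_from ord u p q \/ lex_from ord u q p.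
Proof.
elim: p u q => [|a p IH] u [|b q] //= [Ea Wp] [Eb Wq] [size_pq] pq.
have [ab|/eqP ab] := eqVneq a b.
  subst b; have /(IH _ _ Wp Wq size_pq) : p <> q by move=> p_q; apply: pq; rewrite p_q.
  by case=> lex; [left|right]; right; split.
by case: (ord_total Ea Eb ab) => o; [left|right]; left; split=> // /esym.
Qed.

Lemma shortlex_from_irr u p : ~ shortlex_from ord u p p.
Proof. by case=> [|[_ /lex_from_irr]]; rewrite ?ltnn. Qed.

Lemma shortlex_from_trans u p q r :
  shortlex_from ord u p q -> shortlex_from ord u q r -> shortlex_from ord u p r.
Proof.
case=> [lt_pq|[eq_pq lex_pq]] [lt_qr|[eq_qr lex_qr]].
- by left; apply: ltn_trans lt_qr.
- by left; rewrite -eq_qr.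
- by left; rewrite eq_pq.
- by right; split; [rewrite eq_pq|apply: lex_from_trans lex_pq lex_qr].
Qed.

Lemma shortlex_from_total u p q : is_walk E u p -> is_walk E u q -> p <> q ->
  shortlex_from ord u p q \/ shortlex_from ord u q p.
Proof.
move=> Wp Wq pq; case: (ltngtP (size p) (size q)) => [lt|lt|eq_size].
- by left; left.
- by right; left.
- by case: (lex_from_total Wp Wq eq_size pq); [left|right]; right.
Qed.

Lemma chain_ordE v s :
  chain (ord v) s <-> pairwise (fun a b => `[< ord v a b >]) s.
Proof.
rewrite chainE sorted_pairwise //.
by move=> b a c /asboolP oab /asboolP obc; apply/asboolP; apply: ord_trans oab obc.
Qed.

End EdgeOrder.

Lemma exists_min_in_seq (T : eqType) (lt : T -> T -> Prop) (P : T -> Prop)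
    (s : seq T) :
  (forall a b c, lt a b -> lt b c -> lt a c) ->
  (forall a b, P a -> P b -> a <> b -> lt a b \/ lt b a) ->
  (exists2 x, x \in s & P x) ->
  exists m, [/\ m \in s, P m & forall x, x \in s -> P x -> x = m \/ lt m x].
Proof.
move=> lt_trans lt_total; elim: s => [[]//|y s IH] exP.
have [/IH [m [ms Pm m_min]]|no_P] := pselect (exists2 x, x \in s & P x).
  have [[Py lt_ym]|y_not_min] := pselect (P y /\ lt y m).
    exists y; split=> [||x]; rewrite ?mem_head // inE => /predU1P [->|xs Px].
      by left.
    by right; case: (m_min x xs Px) => [->|]; last apply: lt_trans.
  exists m; split=> [||x]; rewrite ?inE ?ms ?orbT // => /predU1P [->|xs Px].
    move=> Py; have [->|/eqP ym] := eqVneq y m; first by left.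
    by case: (lt_total _ _ Py Pm ym) => ?; [case: y_not_min|right].
  exact: m_min.
have [x xys Px] := exP; have Py : P y.
  by move: xys; rewrite inE => /predU1P [<-//|xs]; case: no_P; exists x.
exists y; split=> [||x']; rewrite ?mem_head // inE => /predU1P [->|x's Px'].
  by left.
by case: no_P; exists x'.
Qed.

Definition seqs_upto (T : finType) (n : nat) : seq (seq T) :=
  flatten [seq map val (enum {: k.-tuple T}) | k <- iota 0 n.+1].

Lemma mem_seqs_upto (T : finType) n (s : seq T) : size s <= n -> s \in seqs_upto T n.
Proof.
move=> size_s; apply/flattenP; exists (map val (enum {: (size s).-tuple T})).
  by apply/mapP; exists (size s); rewrite ?mem_iota.
by apply/mapP; exists (in_tuple s); rewrite ?mem_enum.
Qed.

Section InitialSegments.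
Variables (T : finType) (lt : T -> T -> Prop).

Definition initial_segment (L : seq T) : Prop :=
  [/\ uniq L, forall x y, precedes L x y -> lt x y
    & forall x y, x \in L -> y \notin L -> lt x y].

Lemma initial_segment_rcons L v : initial_segment L -> v \notin L ->
  (forall y, y \notin rcons L v -> lt v y) -> initial_segment (rcons L v).
Proof.
move=> [uL sortedL initL] vL v_min.
have idx x : x \in L -> index x (rcons L v) = index x L.
  by move=> xL; rewrite -cats1 index_cat xL.
have idx_v : index v (rcons L v) = size L.
  by rewrite -cats1 index_cat (negbTE vL) /= eqxx addn0.
split=> [|x y [+ []]|x y]; rewrite ?rcons_uniq ?vL // !mem_rcons !inE.
  case/predU1P=> [->|xL] /predU1P [->|yL]; rewrite ?ltnn ?idx_v ?idx //.
  - by rewrite ltnNge index_size.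
  - by move=> _; apply: initL.
  - by move=> lt_xy; apply: sortedL.
case/predU1P=> [->|xL] /norP [yv yL]; first by apply: v_min; rewrite mem_rcons inE negb_or yv.
exact: initL.
Qed.

Lemma initial_segment_precedes L :
  (forall x, ~ lt x x) -> (forall x y z, lt x y -> lt y z -> lt x z) ->
  initial_segment L -> forall x y, x \in L -> y \in L -> precedes L x y <-> lt x y.
Proof.
move=> lt_irr lt_trans [_ sortedL _] x y xL yL; split; first exact: sortedL.
move=> lt_xy; split=> //; split=> //.
case: ltngtP => // [lt_yx|/(index_inj x xL yL) eq_xy].
  by case: (lt_irr x); apply: lt_trans lt_xy (sortedL _ _ _).
by rewrite eq_xy in lt_xy; case: (lt_irr y).
Qed.

End InitialSegments.

Section LexBFS.
Variables (V : finType) (E : V -> V -> Prop) (ord : V -> V -> V -> Prop) (v0 : V).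
Hypotheses (ordE : edge_ordered E ord) (connE : connected E v0).

Lemma minimal_walk_exists v : exists m, [/\ is_walk E v0 m, last v0 m = v &
  forall q, is_walk E v0 q -> last v0 q = v -> q = m \/ shortlex_from ord v0 m q].
Proof.
(* A walk longer than [s] is never least, so minimising over the finitely many
   sequences of size at most [size s] suffices. *)
have [_ /walkE [s [_ Ws Ls]]] := connE v.
pose P q := is_walk E v0 q /\ last v0 q = v.
have [||m [_ [Wm Lm] m_min]] := @exists_min_in_seq _ (shortlex_from ord v0) P
    (seqs_upto V (size s)) (shortlex_from_trans ordE (u := v0)).
- by move=> a b [Wa _] [Wb _]; apply: shortlex_from_total.
- by exists s; [apply: mem_seqs_upto|].
exists m; split=> // q Wq Lq; case: (leqP (size q) (size s)) => [le_qs|lt_sq].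
  exact: m_min (mem_seqs_upto le_qs) (conj Wq Lq).
right; left; apply: leq_ltn_trans lt_sq.
by case: (m_min s (mem_seqs_upto (leqnn _)) (conj Ws Ls)) => [->|/shortlex_from_size].
Qed.

(* [mpath v] is min^s(v0 ~> v) without its source v0. *)
Definition mpath (v : V) : seq V := sval (cid (minimal_walk_exists v)).

Lemma mpath_walk v : is_walk E v0 (mpath v).
Proof. by case: (svalP (cid (minimal_walk_exists v))). Qed.

Lemma mpath_last v : last v0 (mpath v) = v.
Proof. by case: (svalP (cid (minimal_walk_exists v))). Qed.

Lemma mpath_min v q : is_walk E v0 q -> last v0 q = v ->
  q = mpath v \/ shortlex_from ord v0 (mpath v) q.
Proof. by case: (svalP (cid (minimal_walk_exists v))) => _ _; apply. Qed.

Lemma mpath_root : mpath v0 = [::].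
Proof.
by case: (mpath_min (q := [::]) I erefl) => [<-|/shortlex_from_size]; last case: mpath.
Qed.

Lemma mpath_nil u : mpath u = [::] -> u = v0.
Proof. by rewrite -{2}(mpath_last u) => ->. Qed.

Lemma minpathE v p : minpath E ord v0 v p <-> p = v0 :: mpath v.
Proof.
have Wv : walk E v0 v (v0 :: mpath v).
  by split; [|split; [apply: mpath_walk|apply: mpath_last]].
split=> [[/walkE [s [-> Ws Ls]] s_min]|->].
  case: (mpath_min Ws Ls) => [->//|lt_ms].
  case: (s_min _ Wv) => [[->]//|/shortlex_cons lt_sm].
  by case: (shortlex_from_irr (shortlex_from_trans ordE lt_sm lt_ms)).
split=> // q /walkE [s [-> Ws Ls]].
by case: (mpath_min Ws Ls) => [->|/shortlex_cons]; [left|right].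
Qed.

Lemma mpath_prefix s t w : mpath w = s ++ t -> mpath (last v0 s) = s.
Proof.
move=> Hw; have /is_walk_cat [Ws Wt] : is_walk E v0 (s ++ t) by rewrite -Hw; apply: mpath_walk.
case: (mpath_min Ws erefl) => [<-//|lt_ms]; exfalso.
have W' : is_walk E v0 (mpath (last v0 s) ++ t).
  by apply/is_walk_cat; rewrite mpath_last; split=> //; apply: mpath_walk.
have L' : last v0 (mpath (last v0 s) ++ t) = w.
  by rewrite last_cat mpath_last -last_cat -Hw mpath_last.
have lt_w := shortlex_from_cat (erefl (size t)) lt_ms; rewrite -Hw in lt_w.
case: (mpath_min W' L') => [eq_w|lt_w'].
  by rewrite -eq_w in lt_w; apply: shortlex_from_irr lt_w.
by apply: shortlex_from_irr (shortlex_from_trans ordE lt_w' lt_w).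
Qed.

Lemma mpath_parent w : w <> v0 -> exists2 p, E p w & mpath w = rcons (mpath p) w.
Proof.
move=> w_v0; case/lastP E_w: (mpath w) => [|s a]; first by move/mpath_nil: E_w.
have a_w : a = w by rewrite -(mpath_last w) E_w last_rcons.
have := mpath_walk w; rewrite E_w => /is_walk_rcons [_ Ea].
exists (last v0 s); first by rewrite -a_w.
by rewrite -cats1 in E_w; rewrite (mpath_prefix E_w) a_w.
Qed.

Definition path_lt (u v : V) : Prop := shortlex_from ord v0 (mpath u) (mpath v).

Lemma path_lt_irr u : ~ path_lt u u.
Proof. exact: shortlex_from_irr. Qed.

Lemma path_lt_trans u v w : path_lt u v -> path_lt v w -> path_lt u w.
Proof. exact: shortlex_from_trans. Qed.

Lemma path_lt_root w : w <> v0 -> path_lt v0 w.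
Proof.
by move=> w_v0; left; rewrite mpath_root lt0n size_eq0; apply/eqP => /mpath_nil.
Qed.

Lemma not_path_lt_root u : ~ path_lt u v0.
Proof. by rewrite /path_lt mpath_root => [[|[/size0nil -> /lex_from_irr]]]. Qed.

Lemma path_lt_parent p w : mpath w = rcons (mpath p) w -> path_lt p w.
Proof. by move=> Hw; left; rewrite Hw size_rcons. Qed.

Lemma path_lt_edge x y p w : E x y -> mpath w = rcons (mpath p) w -> y <> w ->
  path_lt x p \/ (x = p /\ ord p y w) -> path_lt y w.
Proof.
move=> Exy Hw yw xp; rewrite /path_lt Hw.
have lt_w : shortlex_from ord v0 (rcons (mpath x) y) (rcons (mpath p) w).
  rewrite -!cats1; case: xp => [lt_xp|[-> o_pyw]]; first exact: shortlex_from_cat.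
  by right; split; [rewrite !size_cat|apply: lex_from_cat; rewrite ?mpath_last].
have Wxy : is_walk E v0 (rcons (mpath x) y).
  by apply/is_walk_rcons; rewrite mpath_last; split=> //; apply: mpath_walk.
case: (mpath_min Wxy (last_rcons _ _ _)) => [<-//|lt_y].
exact: (shortlex_from_trans ordE lt_y lt_w).
Qed.

Local Notation A := (S_edge E ord v0).

Lemma S_edgeE u v : A u v <-> mpath v = rcons (mpath u) v.
Proof.
split=> [[_ [p1 [p2 [/minpathE -> Hp]]]]|Hv].
  have [s Hs] : exists s, rcons p1 u = v0 :: s.
    by case: p1 Hp => [|a p1] [-> _]; [exists [::]|exists (rcons p1 u)].
  have Hv : mpath v = rcons s v ++ p2.
    by move: Hp; rewrite -cat_rcons Hs => [[->]]; rewrite cat_rcons.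
  have Hsv := mpath_prefix Hv; rewrite last_rcons in Hsv.
  have Hu : last v0 s = u by have := last_rcons v0 p1 u; rewrite Hs.
  have Hs' : mpath u = s by rewrite -Hu (mpath_prefix (w := v) (t := [:: v])) // cats1.
  by rewrite Hsv Hs'.
exists (v0 :: mpath v), (belast v0 (mpath u)), [::]; split; first exact/minpathE.
by rewrite Hv -rcons_cons lastI mpath_last -!cats1 -catA.
Qed.

Lemma S_walkE p : is_walk A v0 p <-> p = mpath (last v0 p).
Proof.
elim/last_ind: p => [|p a IH]; first by rewrite mpath_root.
rewrite is_walk_rcons last_rcons S_edgeE; split=> [[/IH Hp ->]|Ha]; first by rewrite -Hp.
have Hp : mpath (last v0 p) = p by apply: (mpath_prefix (t := [:: a])); rewrite cats1 Ha.
by split; [apply/IH; rewrite Hp|rewrite -Ha Hp].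
Qed.

Lemma S_walk_root u p : walk A v0 u p <-> p = v0 :: mpath u.
Proof.
rewrite walkE; split=> [[s [-> /S_walkE Hs <-]]|->]; first by rewrite -Hs.
by exists (mpath u); rewrite mpath_last; split=> //; apply/S_walkE; rewrite mpath_last.
Qed.

Lemma Gamma_edge_root u : Gamma_edge A v0 u <-> u <> v0.
Proof.
split=> [|u_v0].
  have not_root x y : clos_trans V A x y -> y <> v0.
    by elim=> // {}x {}y /S_edgeE Hy y_v0; rewrite y_v0 mpath_root in Hy; case: (mpath _) Hy.
  exact: not_root.
rewrite -(mpath_last u); apply: is_walk_clos_trans; first by move/mpath_nil.
by apply/S_walkE; rewrite mpath_last.
Qed.

Lemma Gamma_ord_root u v : u <> v0 -> v <> v0 ->
  Gamma_ord A (S_ord E ord v0) v0 v0 u v <-> path_lt u v.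
Proof.
move=> u_v0 v_v0.
have S_ordE x a b : A x a -> A x b -> S_ord E ord v0 x a b <-> ord x a b.
  by rewrite /S_ord; tauto.
have S_walk x : is_walk A v0 (mpath x) by apply/S_walkE; rewrite mpath_last.
have lt_S : shortlex (S_ord E ord v0) (v0 :: mpath u) (v0 :: mpath v) <-> path_lt u v.
  by rewrite shortlex_cons /shortlex_from /path_lt (eq_lex_from S_ordE (S_walk u) (S_walk v)).
split=> [[_ [_ [p1 [p2 [/S_walk_root -> [/S_walk_root -> /lt_S]]]]]]|lt_uv] //.
split; first exact/Gamma_edge_root.
split; first exact/Gamma_edge_root.
exists (v0 :: mpath u), (v0 :: mpath v).
by rewrite !S_walk_root; split=> //; split=> //; apply/lt_S.
Qed.

(* A queue entry [(x, y)] stands for the vertex [y], enqueued when [x] was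
   visited.  In [lbfs_queue L L' P], [L'] is [L], or [L] extended by the vertex
   being visited. *)
Definition queue_lt (e e' : V * V) : Prop :=
  path_lt e.1 e'.1 \/ (e.1 = e'.1 /\ ord e.1 e.2 e'.2).

Definition lbfs_queue (L L' : seq V) (P : seq (V * V)) : Prop :=
  [/\ forall e, e \in P -> e.1 \in L /\ E e.1 e.2,
      pairwise (fun e e' => `[< queue_lt e e' >]) P
    & forall x y, x \in L -> E x y -> y \notin L' -> (x, y) \in P].

Definition lbfs_inv (L Q : seq V) : Prop :=
  initial_segment path_lt L /\
  (L = [::] /\ Q = [:: v0] \/
   v0 \in L /\ exists2 P, Q = unzip2 P & lbfs_queue L L P).

Lemma queue_head_min L x y P : v0 \in L -> lbfs_queue L L ((x, y) :: P) ->
  y \notin L -> forall w, w \notin L -> y <> w -> path_lt y w.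
Proof.
(* Induction on [mpath w]: if the parent [p] of [w] is visited, the entry
   [(p, w)] comes after [(x, y)] in the queue. *)
move=> v0L [inP sortedP coverP] yL w.
have [_ Exy] := inP _ (mem_head _ _).
have [n] := ubnP (size (mpath w)); elim: n w => // n IH w.
rewrite ltnS => size_w wL yw.
have w_v0 : w <> v0 by move=> w_v0; rewrite w_v0 v0L in wL.
have [p Epw Hw] := mpath_parent w_v0.
have [pL|pL] := boolP (p \in L).
  apply: (path_lt_edge Exy Hw yw).
  have := coverP p w pL Epw wL; rewrite inE => /predU1P [[_ /esym]//|pwP].
  by move: sortedP => /andP [/allP /(_ _ pwP) /asboolP [lt_xp|[/= -> o_pyw]] _]; [left|right].
have [->|/eqP yp] := eqVneq y p; first exact: path_lt_parent Hw.
apply: path_lt_trans (path_lt_parent Hw); apply: IH => //.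
by move: size_w; rewrite Hw size_rcons.
Qed.

Lemma lbfs_queue_behead L L' e P : {subset L <= L'} -> e.2 \in L' ->
  lbfs_queue L L (e :: P) -> lbfs_queue L L' P.
Proof.
move=> sub_LL' e2L' [inP /andP [_ sortedP] coverP]; split=> // [e' e'P|x y xL Exy yL'].
  by apply: inP; rewrite inE e'P orbT.
have := coverP x y xL Exy (contra (@sub_LL' y) yL').
rewrite inE => /predU1P [ey|//].
by rewrite -ey in e2L'; case/negP: yL'.
Qed.

Lemma lbfs_queue_visit L v P ns : v \notin L ->
  (forall x, x \in L -> path_lt x v) -> lbfs_queue L (rcons L v) P ->
  (forall y, y \in ns <-> E v y /\ y \notin rcons L v) -> chain (ord v) ns ->
  lbfs_queue (rcons L v) (rcons L v) (P ++ [seq (v, y) | y <- ns]).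
Proof.
move=> vL lt_v [inP sortedP coverP] nsP ns_chain; split.
- move=> e; rewrite mem_cat => /orP [/inP [e1L Ee]|/mapP [y /nsP [Evy _] ->]].
    by rewrite mem_rcons inE e1L orbT.
  by rewrite mem_rcons mem_head.
- rewrite pairwise_cat sortedP pairwise_map; apply/and3P; split=> //.
    by apply/allrelP => e _ /inP [e1L _] /mapP [y _ ->]; apply/asboolP; left; apply: lt_v.
  move/(chain_ordE ordE): ns_chain; apply: sub_pairwise => a b /asboolP o_ab.
  by apply/asboolP; right.
- move=> x y; rewrite mem_rcons inE mem_cat => /predU1P [->|xL] Exy yL.
    by apply/orP; right; apply: map_f; apply/nsP.
  by rewrite coverP.
Qed.

Lemma lbfs_inv_skip L v Q : v \in L -> lbfs_inv L (v :: Q) -> lbfs_inv L Q.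
Proof.
move=> vL [L_init [[L0 _]|[v0L [[|e P] //= [ev ->] Pq]]]]; first by rewrite L0 in vL.
by split=> //; right; split=> //; exists P => //; apply: lbfs_queue_behead Pq; rewrite -?ev.
Qed.

Lemma lbfs_inv_pop L v Q : v \notin L -> lbfs_inv L (v :: Q) ->
  (forall y, y \notin rcons L v -> path_lt v y) /\
  exists2 P, Q = unzip2 P & lbfs_queue L (rcons L v) P.
Proof.
move=> vL [_ [[-> [-> ->]]|[v0L [[|[x y] P] //= [<- ->] Pq]]]].
  split=> [y /= /norP [/eqP y_v0 _]|]; first exact: path_lt_root.
  by exists [::] => //; split=> // ? ?; rewrite in_nil.
split=> [w|].
  rewrite mem_rcons inE => /norP [wy wL]; apply: (queue_head_min v0L Pq) => //.
  by apply/eqP; rewrite eq_sym.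
exists P => //; apply: lbfs_queue_behead Pq; last by rewrite mem_rcons mem_head.
by move=> z zL; rewrite mem_rcons inE zL orbT.
Qed.

Lemma lbfs_inv_visit L v Q ns : v \notin L ->
  (forall y, y \in ns <-> E v y /\ y \notin rcons L v) -> chain (ord v) ns ->
  lbfs_inv L (v :: Q) -> lbfs_inv (rcons L v) (Q ++ ns).
Proof.
move=> vL nsP ns_chain Linv.
have [v_min [P QP Pq]] := lbfs_inv_pop vL Linv.
have [L_init _] := Linv; have [_ _ initL] := L_init.
have v0L : v0 \in rcons L v by apply/contraT => /v_min /not_path_lt_root.
split; first exact: initial_segment_rcons.
right; split=> //; exists (P ++ [seq (v, y) | y <- ns]).
  by rewrite QP /unzip2 map_cat -map_comp; congr (_ ++ _); symmetry; apply: map_id.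
by apply: lbfs_queue_visit => // x xL; apply: initL.
Qed.

Lemma lbfs_inv_reach s s' : clos_refl_trans _ (lbfs_step E ord) s s' ->
  lbfs_inv s.1 s.2 -> lbfs_inv s'.1 s'.2.
Proof.
elim=> [s1 s2 [L v Q vL|L v Q ns vL _ nsP ns_chain]|//|s1 s2 s3 _ IH1 _ IH2] /=.
- exact: lbfs_inv_skip.
- exact: lbfs_inv_visit.
- by move/IH1/IH2.
Qed.

Lemma lbfs_neighbours v L : exists ns,
  [/\ uniq ns, forall y, y \in ns <-> E v y /\ y \notin rcons L v & chain (ord v) ns].
Proof.
pose le a b := `[< a = b \/ ord v a b >].
pose ns := sort le [seq y <- enum V | `[< E v y /\ y \notin rcons L v >]].
have ns_uniq : uniq ns by rewrite sort_uniq filter_uniq ?enum_uniq.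
have le_trans b a c : le a b -> le b c -> le a c.
  move=> /asboolP [->|oab] /asboolP [<-|obc]; apply/asboolP; auto.
  by right; apply: (ord_trans ordE oab obc).
have ns_le : pairwise le ns.
  rewrite -sorted_pairwise //; apply: (sort_sorted_in (P := fun y => `[< E v y >])).
    move=> a b /asboolP Ea /asboolP Eb; rewrite /le.
    have [->|/eqP ab] := eqVneq a b; first by rewrite (asboolT (or_introl erefl)).
    by case: (ord_total ordE Ea Eb ab) => o; apply/orP; [left|right]; apply/asboolP; right.
  by apply/allP => y; rewrite mem_filter => /andP [/asboolP [Evy _] _]; apply/asboolP.
exists ns; split=> // [y|].
  by rewrite mem_sort mem_filter mem_enum andbT; split=> /asboolP.
apply/(chain_ordE ordE).
have : pairwise [rel a b | le a b && (a != b)] ns.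
  by rewrite pairwise_relI ns_le -uniq_pairwise.
apply: sub_pairwise => a b /andP [/asboolP [->|oab] ab]; last exact/asboolP.
by rewrite eqxx in ab.
Qed.

Lemma lbfs_run L Q : uniq L ->
  exists L', clos_refl_trans _ (lbfs_step E ord) (L, Q) (L', [::]).
Proof.
have [n] := ubnP (#|V| - size L); elim: n L Q => // n IHn L Q.
rewrite ltnS => bound uL; elim: Q => [|v Q IHQ]; first by exists L; apply: rt_refl.
have [vL|vL] := boolP (v \in L).
  by have [L' run] := IHQ; exists L'; apply: rt_trans run; apply/rt_step/lbfs_skip.
have [ns [ns_uniq nsP ns_chain]] := lbfs_neighbours v L.
have uLv : uniq (rcons L v) by rewrite rcons_uniq vL uL.
have size_Lv : size (rcons L v) <= #|V| by rewrite -(card_uniqP uLv) max_card.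
have [|L' run] := IHn (rcons L v) (Q ++ ns) _ uLv.
  by move: size_Lv; rewrite size_rcons; lia.
by exists L'; apply: rt_trans run; apply: rt_step; apply: lbfs_visit.
Qed.

Lemma lbfs_traversal_exists : exists L, lbfs_traversal E ord v0 L.
Proof. exact: lbfs_run. Qed.

Lemma lbfs_traversal_inv L : lbfs_traversal E ord v0 L -> lbfs_inv L [::].
Proof.
move/lbfs_inv_reach; apply; split; last by left.
by split=> // x y [].
Qed.

Lemma lbfs_traversal_sorted L : lbfs_traversal E ord v0 L ->
  (forall y, y \in L) /\ (forall u v, precedes L u v <-> path_lt u v).
Proof.
move/lbfs_traversal_inv=> [L_init [[_ //]|[v0L [[|e P] // _ [_ _ coverP]]]]].
have closedL x y : x \in L -> E x y -> y \in L.
  by move=> xL Exy; apply/contraT => /(coverP x y xL Exy).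
have allL y : y \in L.
  by have [_ /walkE [s [_ Ws <-]]] := connE y; apply: is_walk_closed closedL v0L Ws.
split=> // u v.
exact: (initial_segment_precedes path_lt_irr path_lt_trans L_init (allL u) (allL v)).
Qed.

Lemma lbfs_traversal_head L : lbfs_traversal E ord v0 L -> exists L', L = v0 :: L'.
Proof.
move=> /lbfs_traversal_sorted [allL precE]; case: L allL precE => [/(_ v0)//|x L'] allL precE.
exists L'; have [-> //|xv0] := eqVneq x v0.
have : precedes (x :: L') x v0.
  by split; [rewrite mem_head|split; [apply: allL|rewrite /= eqxx (negbTE xv0)]].
by move/precE/not_path_lt_root.
Qed.

End LexBFS.

Theorem lemma9p2 (V : finType) (E : V -> V -> Prop) (ord : V -> V -> V -> Prop)
    (v0 : V) (Hord : edge_ordered E ord) (Hconn : connected E v0) :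
  let TE := Gamma_edge (S_edge E ord v0) in
  let Tord := Gamma_ord (S_edge E ord v0) (S_ord E ord v0) v0 in
  (exists L, lbfs_traversal E ord v0 L) /\
  forall L, lbfs_traversal E ord v0 L ->
    (exists L', L = v0 :: L') /\
    (forall u, TE v0 u <-> u <> v0) /\
    (forall u v, TE v0 u -> TE v0 v -> (Tord v0 u v <-> precedes L u v)).
Proof.
move=> TE Tord; split; first exact: lbfs_traversal_exists.
move=> L HL; have [_ precE] := lbfs_traversal_sorted Hord Hconn HL.
have TE_root u : TE v0 u <-> u <> v0 := Gamma_edge_root Hord Hconn u.
split; first exact: (lbfs_traversal_head Hord Hconn HL).
split=> // u v /TE_root u_v0 /TE_root v_v0.
by rewrite /Tord (Gamma_ord_root Hord Hconn u_v0 v_v0) precE.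
Qed.
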